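(* Let $\mu$ be any weight in the weight lattice of $\Delta(\mathfrak k,\mathfrak t_f)$, let $\beta$ be the highest weight of the $\mathfrak k$-representation $\mathfrak p$, and let $0\le j\le s-1$. Then $$2\langle\rho_c,\ \{\mu-\rho_n^{(j)}\}-\{\mu-\beta-\rho_n^{(j)}\}\rangle\ \ge\ -2\langle\rho_c,\beta\rangle.$$
   Context: Setting: $G(\mathbb R)$ a real form of a complex connected simple group, Cartan involution $\theta$, $\mathfrak g=\mathfrak k\oplus\mathfrak p$ complexified Cartan decomposition, $\mathfrak h_f=\mathfrak t_f\oplus\mathfrak a_f$ the fundamental $\theta$-stable Cartan subalgebra ($\mathfrak t_{f,0}$ maximal abelian in $\mathfrak k_0$); assume $\mathfrak k$ has no center and $\mathfrak p$ is an irreducible $\mathfrak k$-module with highest weight $\beta$. $\langle\cdot,\cdot\rangle$ is induced by a fixed nondegenerate invariant form. Positive systems $\Delta^+(\mathfrak g,\mathfrak t_f)=\Delta^+(\mathfrak k,\mathfrak t_f)\cup\Delta^+(\mathfrak p,\mathfrak t_f)$ are fixed; $\rho_c$ is half the sum of $\Delta^+(\mathfrak k,\mathfrak t_f)$. With $C$, $C_{\mathfrak g}$ the dominant chambers of $\Delta^+(\mathfrak k,\mathfrak t_f)$, $\Delta^+(\mathfrak g,\mathfrak t_f)$, $W(\mathfrak g,\mathfrak t_f)^1=\{w: w(C_{\mathfrak g})\subseteq C\}=\{w^{(0)},\dots,w^{(s-1)}\}$ and $\rho_n^{(j)}$ is half the sum of $w^{(j)}\Delta^+(\mathfrak p,\mathfrak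 t_f)$. For a weight $\nu$, $\{\nu\}$ denotes the unique $\Delta^+(\mathfrak k,\mathfrak t_f)$-dominant element of $W(\mathfrak k,\mathfrak t_f)\nu$. *)

(* Abstract root-system model of the data
   (t_f^*, Delta(k,t_f), Delta(p,t_f), W(k,t_f), W(g,t_f), ...). *)
From HB Require Import structures.
From mathcomp Require Import all_boot all_order all_algebra.
Set Implicit Arguments. Unset Strict Implicit. Unset Printing Implicit Defensive.
Import Order.TTheory GRing.Theory Num.Theory.
Local Open Scope ring_scope.

Section RootData.
Variables (R : realFieldType) (n : nat).
Local Notation V := 'rV[R]_n.

Definition dot (u v : V) : R := \sum_(i < n) u ord0 i * v ord0 i.

Definition refl (a v : V) : V := v - ((2 * dot v a) / dot a a) *: a.

Inductive inW (S : seq V) : (V -> V) -> Prop :=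
| inW_id : inW S id
| inW_step (a : V) (f : V -> V) : a \in S -> inW S f -> inW S (refl a \o f).

Definition integral_wrt (S : seq V) (x : V) : Prop :=
  forall a, a \in S -> exists z : int, 2 * dot x a / dot a a = z%:~R.

(* a (possibly non-reduced) crystallographic root system (roots listed
   with multiplicities allowed) *)
Definition root_system (S : seq V) : Prop :=
  [/\ 0 \notin S,
      forall a b, a \in S -> b \in S -> refl a b \in S &
      forall b, b \in S -> integral_wrt S b].

Definition reduced_root_system (S : seq V) : Prop :=
  [/\ uniq S, root_system S &
      forall a (c : R), a \in S -> c *: a \in S -> c = 1 \/ c = -1].

(* the roots span the space (k has no center, t_f Cartan of k) *)
Definition spans (S : seq V) : Prop :=
  forall v : V, (forall a, a \in S -> dot v a = 0) -> v = 0.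

Definition regular (S : seq V) (h : V) : Prop := forall a, a \in S -> dot a h != 0.
Definition pos_sys (S : seq V) (h : V) : seq V := [seq a <- S | 0 < dot a h].

Definition half_sum (S : seq V) : V := 2^-1 *: \sum_(a <- S) a.

Definition dominant (P : seq V) (x : V) : Prop := forall a, a \in P -> 0 <= dot x a.
Definition in_chamber (P : seq V) (x : V) : Prop := forall a, a \in P -> 0 < dot x a.

Definition nat_span_le (P : seq V) (y x : V) : Prop :=
  exists c : V -> nat, x - y = \sum_(a <- P) (c a)%:R *: a.

(* beta is the highest weight of the module whose nonzero weights (with
   multiplicity) are Wt, relative to the positive system P *)
Definition highest_weight (P Wt : seq V) (beta : V) : Prop :=
  beta \in Wt /\ forall g, g \in Wt -> nat_span_le P g beta.

(* d = {nu}: d is the dominant (for P) element of the W(S)-orbit of nu *)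
Definition dom_rep (S P : seq V) (nu d : V) : Prop :=
  (exists u, inW S u /\ d = u nu) /\ dominant P d.

End RootData.

From HB Require Import structures.
From mathcomp Require Import all_boot all_order all_algebra.
From mathcomp Require Import ring lra.
Set Implicit Arguments. Unset Strict Implicit. Unset Printing Implicit Defensive.
Import Order.TTheory GRing.Theory Num.Theory.
Local Open Scope ring_scope.

(* Write nu = mu - rho_n, so that d1 = {nu} and d2 = u (nu - beta) for some u
   in W(k).  Since rho_c is dominant, <rho_c, u nu> <= <rho_c, {nu}> for every
   u in W(k); hence <rho_c, d1 - d2> >= <rho_c, u beta>.  Now -u beta is again
   a weight of p, so beta - (-u beta) is a sum of positive compact roots and
   <rho_c, -u beta> <= <rho_c, beta>. *)

Section Dot.
Variables (R : realFieldType) (n : nat).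
Implicit Types u v w : 'rV[R]_n.

Lemma dotC u v : dot u v = dot v u.
Proof. by apply: eq_bigr => i _; rewrite mulrC. Qed.

Lemma dotDr u v w : dot u (v + w) = dot u v + dot u w.
Proof. by rewrite /dot -big_split; apply: eq_bigr => i _; rewrite !mxE mulrDr. Qed.

Lemma dotZr u v k : dot u (k *: v) = k * dot u v.
Proof. by rewrite /dot mulr_sumr; apply: eq_bigr => i _; rewrite !mxE mulrCA. Qed.

Lemma dotNr u v : dot u (- v) = - dot u v.
Proof. by rewrite -scaleN1r dotZr mulN1r. Qed.

Lemma dotBr u v w : dot u (v - w) = dot u v - dot u w.
Proof. by rewrite dotDr dotNr. Qed.

Lemma dot0r u : dot u 0 = 0.
Proof. by rewrite /dot big1 // => i _; rewrite mxE mulr0. Qed.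

Lemma dotZl u v k : dot (k *: v) u = k * dot v u.
Proof. by rewrite !(dotC _ u) dotZr. Qed.

Lemma dotNl u v : dot (- v) u = - dot v u.
Proof. by rewrite !(dotC _ u) dotNr. Qed.

Lemma dotBl u v w : dot (v - w) u = dot v u - dot w u.
Proof. by rewrite !(dotC _ u) dotBr. Qed.

Lemma dot_sumr u (s : seq 'rV[R]_n) (F : 'rV[R]_n -> 'rV[R]_n) :
  dot u (\sum_(a <- s) F a) = \sum_(a <- s) dot u (F a).
Proof. by elim: s => [|a s IH]; rewrite ?big_nil ?dot0r // !big_cons dotDr IH. Qed.

Lemma dot_suml u (s : seq 'rV[R]_n) (F : 'rV[R]_n -> 'rV[R]_n) :
  dot (\sum_(a <- s) F a) u = \sum_(a <- s) dot (F a) u.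
Proof. by rewrite dotC dot_sumr; apply: eq_bigr => a _; rewrite dotC. Qed.

Lemma dot_ge0 u : 0 <= dot u u.
Proof. by rewrite sumr_ge0 // => i _; rewrite -expr2 sqr_ge0. Qed.

Lemma dot_gt0 u : u != 0 -> 0 < dot u u.
Proof.
move=> u0; rewrite lt_def dot_ge0 andbT; apply: contra u0 => /eqP uu0.
have sq0 := psumr_eq0P (fun i (_ : true) => sqr_ge0 (u ord0 i)) uu0.
by apply/eqP/rowP => i; rewrite mxE; apply/eqP; rewrite -sqrf_eq0; apply/eqP/sq0.
Qed.

Lemma dot_neq0 (S : seq 'rV[R]_n) a : 0 \notin S -> a \in S -> dot a a != 0.
Proof. by move=> S0 aS; rewrite gt_eqF // dot_gt0 //; apply: contraNneq S0 => <-. Qed.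

End Dot.

Section Reflections.
Variables (R : realFieldType) (n : nat).
Implicit Types a x y : 'rV[R]_n.

Lemma refl_iso a x y : dot a a != 0 -> dot (refl a x) (refl a y) = dot x y.
Proof. by move=> a0; rewrite /refl !(dotBl, dotBr, dotZl, dotZr) (dotC a y); field. Qed.

Lemma refl_invol a x : dot a a != 0 -> refl a (refl a x) = x.
Proof.
move=> a0; rewrite {1}/refl dotBl dotZl.
set c := 2 * dot x a / dot a a.
have -> : 2 * (dot x a - c * dot a a) / dot a a = - c by rewrite /c; field.
by rewrite /refl -/c scaleNr opprK subrK.
Qed.

Lemma refl_self a : dot a a != 0 -> refl a a = - a.
Proof.
move=> a0; rewrite /refl.
have -> : 2 * dot a a / dot a a = 2 by field.
by rewrite scaler_nat mulr2n opprD addNKr.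
Qed.

Lemma reflB a x y : refl a (x - y) = refl a x - refl a y.
Proof.
rewrite /refl dotBl mulrBr mulrBl scalerBl opprB.
by apply/rowP => i; rewrite !mxE; ring.
Qed.

Lemma reflN a x : refl a (- x) = - refl a x.
Proof. by rewrite /refl dotNl !mulrN !mulNr scaleNr opprD opprK. Qed.

Lemma refl_perm_eq (S : seq 'rV[R]_n) a :
  uniq S -> dot a a != 0 -> (forall b, b \in S -> refl a b \in S) ->
  perm_eq (map (refl a) S) S.
Proof.
move=> uS a0 reflS; apply: uniq_perm => //.
  by rewrite map_inj_uniq // => x y /(congr1 (refl a)); rewrite !refl_invol.
move=> x; apply/mapP/idP => [[y yS ->]|xS]; first exact: reflS.
by exists (refl a x); rewrite ?refl_invol ?reflS.
Qed.

End Reflections.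

Section WeylGroup.
Variables (R : realFieldType) (n : nat) (S : seq 'rV[R]_n).

Lemma inW_comp f g : inW S f -> inW S g -> inW S (f \o g).
Proof. by move=> Wf Wg; elim: Wf => // a f' aS _ Wf'g; apply: inW_step. Qed.

Lemma inW_refl a : a \in S -> inW S (refl a).
Proof. by move=> aS; apply: (inW_step aS (inW_id S)). Qed.

Lemma inWB u : inW S u -> forall x y, u (x - y) = u x - u y.
Proof. by elim=> [|a f aS _ IH] x y //=; rewrite IH reflB. Qed.

Lemma inWN u : inW S u -> forall x, u (- x) = - u x.
Proof. by elim=> [|a f aS _ IH] x //=; rewrite IH reflN. Qed.

Lemma inW_perm_eq (L : seq 'rV[R]_n) u :
  (forall a, a \in S -> perm_eq (map (refl a) L) L) ->
  inW S u -> perm_eq (map u L) L.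
Proof.
move=> reflL; elim=> [|a f aS _ IH]; first by rewrite map_id.
by rewrite map_comp (perm_trans _ (reflL a aS)) // perm_map.
Qed.

Lemma inW_mem (L : seq 'rV[R]_n) u x :
  (forall a, a \in S -> perm_eq (map (refl a) L) L) ->
  inW S u -> x \in L -> u x \in L.
Proof. by move=> reflL Wu xL; rewrite -(perm_mem (inW_perm_eq reflL Wu)) map_f. Qed.

Hypothesis S_nondeg : forall a, a \in S -> dot a a != 0.

Lemma inW_iso u : inW S u -> forall x y, dot (u x) (u y) = dot x y.
Proof. by elim=> [|a f aS _ IH] x y //=; rewrite refl_iso ?S_nondeg // IH. Qed.

Lemma inW_inv u : inW S u -> exists2 u', inW S u' & cancel u u'.
Proof.
elim=> [|a f aS _ [f' Wf' ff']]; first by exists id; [apply: inW_id|].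
exists (f' \o refl a); first exact: inW_comp Wf' (inW_refl aS).
by move=> x /=; rewrite refl_invol ?S_nondeg.
Qed.

End WeylGroup.

Section PositiveSystem.
Variables (R : realFieldType) (n : nat) (S : seq 'rV[R]_n) (h : 'rV[R]_n).
Hypotheses (S_uniq : uniq S) (S_neq0 : 0 \notin S)
  (S_refl : forall a b, a \in S -> b \in S -> refl a b \in S)
  (S_reg : regular S h).

Local Notation P := (pos_sys S h).
Local Notation rho := (half_sum P).

Lemma root_nondeg a : a \in S -> dot a a != 0.
Proof. exact: dot_neq0. Qed.

Lemma root_opp a : a \in S -> - a \in S.
Proof. by move=> aS; rewrite -refl_self ?root_nondeg ?S_refl. Qed.

Lemma weyl_perm_eq u : inW S u -> perm_eq (map u S) S.
Proof.
apply: inW_perm_eq => r rS.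
by apply: refl_perm_eq S_uniq (root_nondeg rS) _ => b; apply: S_refl.
Qed.

(* Each root of S is either positive or the negative of a positive root. *)
Lemma big_pos_sys_opp (F : 'rV[R]_n -> R) :
  \sum_(a <- S) F a = \sum_(a <- P) (F a + F (- a)).
Proof.
rewrite big_split /= (bigID (fun a => 0 < dot a h)) /= -big_filter; congr (_ + _).
rewrite -(big_map -%R xpredT) -big_filter; apply: perm_big; apply: uniq_perm.
- exact: filter_uniq.
- by rewrite (map_inj_uniq oppr_inj) filter_uniq.
move=> x; rewrite -{2}(opprK x) (mem_map oppr_inj) !mem_filter /= dotNl oppr_gt0.
case xS: (x \in S); last first.
  by rewrite !andbF; apply/esym/negP => /andP[_ /root_opp]; rewrite opprK xS.
by rewrite root_opp // !andbT -leNgt le_eqVlt (negbTE (S_reg xS)).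
Qed.

Lemma big_even_pos_sys (F : 'rV[R]_n -> R) :
  (forall a, F (- a) = F a) -> \sum_(a <- S) F a = (\sum_(a <- P) F a) *+ 2.
Proof.
move=> F_even; rewrite big_pos_sys_opp.
by under eq_bigr do rewrite F_even; rewrite big_split mulr2n.
Qed.

(* Compare sums of |<v b, d>| and |<b, d>| over all of S, where v permutes S. *)
Lemma sum_dot_odd_perm_le d (v : 'rV[R]_n -> 'rV[R]_n) :
  dominant P d -> perm_eq (map v S) S -> (forall a, v (- a) = - v a) ->
  \sum_(b <- P) dot (v b) d <= \sum_(b <- P) dot b d.
Proof.
move=> dom_d vS vN.
have : \sum_(a <- S) `|dot (v a) d| = \sum_(a <- S) `|dot a d|.
  by rewrite -(big_map v xpredT (fun a => `|dot a d|)); apply: perm_big.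
rewrite !big_even_pos_sys => [|a|a]; rewrite ?vN ?dotNl ?normrN //.
have abs_dot b : b \in P -> `|dot b d| = dot b d.
  by move=> bP; rewrite ger0_norm // dotC dom_d.
rewrite (eq_big_seq _ abs_dot) => sum_abs_eq.
have : \sum_(b <- P) dot (v b) d <= \sum_(b <- P) `|dot (v b) d|.
  by apply: ler_sum => b _; apply: ler_norm.
rewrite !mulr2n in sum_abs_eq; lra.
Qed.

Lemma half_sum_pos_dominant : dominant P rho.
Proof.
move=> a; rewrite mem_filter => /andP[a_h aS].
have a0 := root_nondeg aS.
have dom_h : dominant P h by move=> b; rewrite mem_filter dotC => /andP[/ltW].
have := sum_dot_odd_perm_le dom_h (weyl_perm_eq (inW_refl aS)) (reflN a).
have -> : \sum_(b <- P) dot (refl a b) h =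
    \sum_(b <- P) dot b h - (2 / dot a a * dot a h) * \sum_(b <- P) dot b a.
  by rewrite mulr_sumr -sumrB; apply: eq_bigr => b _; rewrite dotBl dotZl; ring.
have c_gt0 : 0 < 2 / dot a a * dot a h.
  by rewrite !mulr_gt0 // invr_gt0 lt_def a0 dot_ge0.
rewrite gerBl (pmulr_rge0 _ c_gt0) => sum_ge0.
by rewrite dotZl dot_suml mulr_ge0 ?invr_ge0.
Qed.

Lemma dot_half_sum_weyl_le d u :
  dominant P d -> inW S u -> dot rho (u d) <= dot rho d.
Proof.
move=> dom_d Wu; have [u' Wu' uK] := inW_inv root_nondeg Wu.
rewrite !dotZl !dot_suml ler_wpM2l ?invr_ge0 //.
under eq_bigr => b _ do rewrite -(inW_iso root_nondeg Wu' b) uK.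
exact: sum_dot_odd_perm_le dom_d (weyl_perm_eq Wu') (inWN Wu').
Qed.

Lemma dot_half_sum_dom_rep_le x d v :
  dom_rep S P x d -> inW S v -> dot rho (v x) <= dot rho d.
Proof.
move=> [[u [Wu ->]] dom_d] Wv; have [u' Wu' uK] := inW_inv root_nondeg Wu.
by rewrite -[in v x](uK x); apply: dot_half_sum_weyl_le (inW_comp Wv Wu').
Qed.

End PositiveSystem.

Lemma dominant_highest_weight_le (R : realFieldType) n (P Wt : seq 'rV[R]_n) x beta g :
  dominant P x -> highest_weight P Wt beta -> g \in Wt -> dot x g <= dot x beta.
Proof.
move=> dom_x [_ hw] gWt; rewrite -subr_ge0 -dotBr; have [c ->] := hw g gWt.
by rewrite dot_sumr big_seq sumr_ge0 // => a aP; rewrite dotZr mulr_ge0 ?dom_x.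
Qed.

Lemma weight_opp (R : realFieldType) n (Dk Dp : seq 'rV[R]_n) g :
  root_system (Dk ++ Dp) -> 0 \notin Dp ->
  (forall a, a \in Dk -> perm_eq (map (refl a) Dp) Dp) ->
  g \in Dp -> - g \in Dp.
Proof.
move=> [_ reflG _] Dp0 reflDp gDp; have g0 := dot_neq0 Dp0 gDp.
have : refl g g \in Dk ++ Dp by apply: reflG; rewrite mem_cat gDp orbT.
rewrite refl_self // mem_cat => /orP[ngDk|] //.
have <- : refl (- g) g = - g.
  by rewrite -[X in refl _ X]opprK reflN refl_self ?opprK // dotNl dotNr opprK.
exact: inW_mem reflDp (inW_refl ngDk) gDp.
Qed.

Unset Implicit Arguments.

Theorem mainTheorem8 (R : realFieldType) (n : nat)
    (Dk Dp : seq 'rV[R]_n) (h beta mu d1 d2 : 'rV[R]_n)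
    (w : 'rV[R]_n -> 'rV[R]_n) :
  reduced_root_system Dk ->
  spans Dk ->
  root_system (Dk ++ Dp) ->
  0 \notin Dp ->
  (forall a, a \in Dk -> perm_eq (map (refl a) Dp) Dp) ->
  regular (Dk ++ Dp) h ->
  highest_weight (pos_sys Dk h) Dp beta ->
  integral_wrt Dk mu ->
  inW (Dk ++ Dp) w ->
  (forall x, in_chamber (pos_sys (Dk ++ Dp) h) x ->
             in_chamber (pos_sys Dk h) (w x)) ->
  dom_rep Dk (pos_sys Dk h) (mu - half_sum (map w (pos_sys Dp h))) d1 ->
  dom_rep Dk (pos_sys Dk h) (mu - beta - half_sum (map w (pos_sys Dp h))) d2 ->
  2 * dot (half_sum (pos_sys Dk h)) (d1 - d2)
    >= - (2 * dot (half_sum (pos_sys Dk h)) beta).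
Proof.
move=> [uDk [Dk0 reflDk _] _] _ rsG Dp0 reflDp regG hw _ _ _ rep1 [[u [Wu ->]] _].
set nu := mu - half_sum _ in rep1 *; set rho := half_sum _.
have regDk : regular Dk h by move=> a aDk; apply: regG; rewrite mem_cat aDk.
have d1_ge := dot_half_sum_dom_rep_le uDk Dk0 reflDk regDk rep1 Wu.
have d2E : u (mu - beta - half_sum (map w (pos_sys Dp h))) = u nu - u beta.
  by rewrite -(inWB Wu) addrAC.
have rho_dom := half_sum_pos_dominant uDk Dk0 reflDk regDk.
have u_beta_ge := dominant_highest_weight_le rho_dom hw
  (weight_opp rsG Dp0 reflDp (inW_mem reflDp Wu (proj1 hw))).
rewrite d2E !dotBr in d1_ge u_beta_ge *; rewrite dotNr in u_beta_ge.
lra.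
Qed.
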